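(* Let $B,C\subset\mathbb{R}^p$ and $w:(B\cup C)\times(B\cup C)\to[0,\infty]$. Then for every positive $d\le p$ and every $s\ge d$, $$\underline{h}^w_{s,d}(B\cup C)^{-d/s}\le\underline{h}^w_{s,d}(B)^{-d/s}+\underline{h}^w_{s,d}(C)^{-d/s},$$ with the conventions $0^{-d/s}=\infty$ and $\infty^{-d/s}=0$.
   Context: For $E\subset\mathbb{R}^p$ and a weight $w$ defined on $E\times E$, an $N$-point configuration in $E$ is a multiset $\omega_N=\{x_1,\dots,x_N\}\subset E$; $P^w_s(E;\omega_N):=\inf_{y\in E}\sum_j w(y,x_j)|y-x_j|^{-s}$, $\mathcal{P}^w_s(E;N):=\sup_{\omega_N\subset E}P^w_s(E;\omega_N)$, $\tau_{s,d}(N)=N^{s/d}$ for $s>d$ and $\tau_{d,d}(N)=N\log N$, and $\underline{h}^w_{s,d}(E):=\liminf_{N\to\infty}\mathcal{P}^w_s(E;N)/\tau_{s,d}(N)$ (with $w$ restricted to $E\times E$). *)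

From HB Require Import structures.
From mathcomp Require Import all_boot all_order all_algebra.
From mathcomp Require Import all_classical all_reals all_analysis.
Set Implicit Arguments. Unset Strict Implicit. Unset Printing Implicit Defensive.
Import Order.TTheory GRing.Theory Num.Theory.
Local Open Scope classical_set_scope.
Local Open Scope ring_scope.

Section Riesz.
Variables (R : realType) (p : nat).
Notation pt := 'rV[R]_p.

Definition edist (x y : pt) : R :=
  Num.sqrt (\sum_(i < p) (x ord0 i - y ord0 i) ^+ 2).

Definition riesz (s : R) (y x : pt) : \bar R :=
  if y == x then +oo%E else (powR (edist y x) (- s))%:E.

Definition Pw (w : pt -> pt -> \bar R) (s : R) (E : set pt) (N : nat)
    (x : 'I_N -> pt) : \bar R :=
  ereal_inf [set (\sum_(j < N) (w y (x j) * riesz s y (x j)))%E | y in E].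

Definition Pcal (w : pt -> pt -> \bar R) (s : R) (E : set pt) (N : nat) : \bar R :=
  ereal_sup [set Pw w s E x | x in [set x : 'I_N -> pt | forall j, E (x j)]].

(* tau_{s,d}(N) = N^{s/d} for s > d, N log N for s = d (only used for s >= d) *)
Definition tau (s : R) (d : nat) (N : nat) : R :=
  if (d%:R < s) then powR N%:R (s / d%:R) else N%:R * ln N%:R.

Definition hlow (w : pt -> pt -> \bar R) (s : R) (d : nat) (E : set pt) : \bar R :=
  limn_einf (fun N => (Pcal w s E N * ((tau s d N)^-1)%:E)%E).

(* h |-> h^{-d/s} on [0, +oo], with 0^{-d/s} = +oo, +oo^{-d/s} = 0;
   values <= 0 (only possible for E empty, where h = -oo) are sent to +oo *)
Definition negpow (s : R) (d : nat) (h : \bar R) : \bar R :=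
  match h with
  | r%:E => if r <= 0 then +oo%E else (powR r (- (d%:R / s)))%:E
  | +oo%E => 0%E
  | -oo%E => +oo%E
  end.

End Riesz.

From mathcomp Require Import all_boot all_order all_algebra.
From mathcomp Require Import all_classical all_reals all_analysis.
From mathcomp Require Import lra.
Import Order.TTheory GRing.Theory Num.Theory.
Local Open Scope classical_set_scope.
Local Open Scope ring_scope.

(* If a^{-s/d} < h(B) and b^{-s/d} < h(C), split n points in the ratio a : b
   (with a little slack): a near-optimal configuration of about a n / (a + b)
   points on B together with one of the remaining points on C is a configuration
   on B ∪ C whose polarization is at least the smaller of the two, because the
   weights are nonnegative and every y ∈ B ∪ C lies in B or in C.  Since
   τ(θ n) ≳ θ^{s/d} τ(n), both polarizations are ≳ (a + b)^{-s/d} τ(n), hence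
   h(B ∪ C)^{-d/s} ≤ a + b. *)

Section limn_einf_near.
Context {R : realType}.
Implicit Types (u : (\bar R)^nat) (c : \bar R).
Local Open Scope ereal_scope.

Lemma limn_einf_gt_near u c : c < limn_einf u -> \forall n \near \oo, c < u n.
Proof.
have -> : limn_einf u = ereal_sup (range (einfs u)).
  by rewrite limn_einf_lim; apply/cvg_lim => //; exact: cvg_einfs_sup.
move=> /ereal_sup_gt[_ [n _ <-]] cu; exists n => // k nk.
by apply: lt_le_trans cu _; apply: ereal_inf_lbound; exists k.
Qed.

Lemma limn_einf_ge_near u c : (\forall n \near \oo, c <= u n) -> c <= limn_einf u.
Proof.
move=> [n _ cu]; rewrite limn_einf_lim; apply: lime_ge; first exact: is_cvg_einfs.
exists n => // m nm; apply: le_ereal_inf_tmp => _ [k /= mk <-].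
by apply: cu; apply: leq_trans mk.
Qed.

End limn_einf_near.

Section nat_scaling.
Context {R : realType}.

Lemma cvgn_ge_scaled {f : nat -> nat} {th : R} : 0 < th ->
  (\forall n \near \oo, th * n%:R <= (f n)%:R) -> f @ \oo --> \oo.
Proof.
move=> th0 f_ge P [m _ Pm].
apply: filterS2 f_ge (nbhs_infty_ger (m%:R / th)) => n fn mn; apply: Pm.
rewrite /= -(ler_nat R); apply: le_trans fn.
by rewrite mulrC -ler_pdivrMr.
Qed.

Lemma truncn_ge_scaled {th' th : R} : 0 < th -> th' < th ->
  \forall n \near \oo, th' * n%:R <= (Num.truncn (th * n%:R))%:R.
Proof.
move=> th0 th'th; near=> n.
have : (th - th')^-1 <= n%:R by near: n; exact: nbhs_infty_ger.
rewrite -[_^-1]mulr1 ler_pdivrMl ?subr_gt0 // => gap.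
have := truncnS_gt (th * n%:R); rewrite -natr1; lra.
Unshelve. all: by end_near. Qed.

End nat_scaling.

Definition cat_config {T : Type} {m n : nat} (x : 'I_m -> T) (y : 'I_n -> T)
    (i : 'I_(m + n)) : T :=
  match fintype.split i with inl j => x j | inr k => y k end.

Lemma cat_config_lshift {T : Type} {m n : nat} (x : 'I_m -> T) (y : 'I_n -> T) j :
  cat_config x y (lshift n j) = x j.
Proof. by rewrite /cat_config (unsplitK (inl _ j)). Qed.

Lemma cat_config_rshift {T : Type} {m n : nat} (x : 'I_m -> T) (y : 'I_n -> T) k :
  cat_config x y (rshift m k) = y k.
Proof. by rewrite /cat_config (unsplitK (inr _ k)). Qed.

Section polarization_union.
Context {R : realType} {p : nat}.
Local Notation pt := 'rV[R]_p.
Context {w : pt -> pt -> \bar R} (s : R) {B C : set pt}.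
Hypothesis w_ge0 : forall x y, (B `|` C) x -> (B `|` C) y -> (0 <= w x y)%E.
Local Open Scope ereal_scope.

Lemma riesz_ge0 (y x : pt) : 0 <= riesz s y x.
Proof. by rewrite /riesz; case: ifP => _; rewrite ?leey ?lee_fin ?powR_ge0. Qed.

Lemma Pw_cat_ge {m n} {x : 'I_m -> pt} {y : 'I_n -> pt} :
  (forall i, B (x i)) -> (forall j, C (y j)) ->
  Order.min (Pw w s B x) (Pw w s C y) <= Pw w s (B `|` C) (cat_config x y).
Proof.
move=> Bx Cy; apply: le_ereal_inf_tmp => _ [z Uz <-].
have term_ge0 v : (B `|` C) v -> 0 <= w z v * riesz s z v.
  by move=> Uv; rewrite mule_ge0 ?riesz_ge0 ?w_ge0.
rewrite big_split_ord /=.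
under eq_bigr do rewrite cat_config_lshift.
under [X in _ + X]eq_bigr do rewrite cat_config_rshift.
rewrite ge_min; case: Uz => [Bz|Cz]; apply/orP; [left|right].
- apply: lee_paddr; first by apply: sume_ge0 => j _; apply: term_ge0; right.
  by apply: ereal_inf_lbound; exists z.
- apply: lee_paddl; first by apply: sume_ge0 => i _; apply: term_ge0; left.
  by apply: ereal_inf_lbound; exists z.
Qed.

Lemma Pcal_cat_ge m n :
  Order.min (Pcal w s B m) (Pcal w s C n) <= Pcal w s (B `|` C) (m + n).
Proof.
rewrite leNgt lt_min; apply/negP => /andP[].
move=> /ereal_sup_gt[_ [x Bx <-] ltx] /ereal_sup_gt[_ [y Cy <-] lty].
have : Pw w s (B `|` C) (cat_config x y) <= Pcal w s (B `|` C) (m + n).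
  apply: ereal_sup_ubound; exists (cat_config x y) => // i.
  by rewrite /cat_config; case: fintype.split => j; [left|right].
by apply/negP; rewrite -ltNge (lt_le_trans _ (Pw_cat_ge Bx Cy)) // lt_min ltx.
Qed.

End polarization_union.

Section lower_polarization.
Context {R : realType} {s : R} {d : nat}.
Hypotheses (d_gt0 : (0 < d)%N) (d_le_s : d%:R <= s).
Local Notation e := (s / d%:R).

Lemma tau_gt0_near : \forall n \near \oo, 0 < tau s d n.
Proof.
near=> n; have n_gt1 : 1 < n%:R :> R by rewrite ltr1n; near: n.
rewrite /tau; case: ifP => _; first by apply: powR_gt0; lra.
by apply: mulr_gt0; [lra | exact: ln_gt0].
Unshelve. all: by end_near. Qed.

Lemma tau_ge_scaled {th' th : R} : 0 < th' -> th' < th ->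
  \forall n \near \oo, forall m : nat,
    th * n%:R <= m%:R -> powR th' e * tau s d n <= tau s d m.
Proof.
move=> th'0 th'th; have d0 : 0 < d%:R :> R by rewrite ltr0n.
rewrite /tau; case: (ltP d%:R s) => [lt_ds | le_sd].
  apply: nearW => n m thn_m; have n0 : 0 <= n%:R :> R := ler0n _ _.
  rewrite -powRM //; last lra.
  apply: ge0_ler_powR; rewrite ?nnegrE ?divr_ge0 //; nra.
have -> : s = d%:R by apply: le_anti; rewrite le_sd.
rewrite divff ?gt_eqF // powRr1; last lra.
(* Once [K <= ln n], [th n ln (th n) >= th' n ln n]. *)
set K := - (th * ln th) / (th - th').
near=> n => m thn_m.
have thn_ge1 : 1 <= th * n%:R.
  have : th^-1 <= n%:R by near: n; exact: nbhs_infty_ger.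
  by rewrite -[_^-1]mulr1 ler_pdivrMl; lra.
have lnn_ge : K <= ln n%:R.
  have : expR K <= n%:R by near: n; exact: nbhs_infty_ger.
  by move=> nK; rewrite -ler_expR lnK // posrE (lt_le_trans (expR_gt0 K)).
have n0 : 0 < n%:R :> R by nra.
have ln_thn : ln (th * n%:R) = ln th + ln n%:R by rewrite lnM ?posrE; lra.
have ln_m : ln (th * n%:R) <= ln m%:R by rewrite ler_ln ?posrE; lra.
have ln_thn0 : 0 <= ln (th * n%:R) by exact: ln_ge0.
have : - (th * ln th) <= (th - th') * ln n%:R.
  by rewrite -ler_pdivrMl ?subr_gt0 // mulrC.
nra.
Unshelve. all: by end_near. Qed.

Lemma tau_truncn_ge {th' th : R} : 0 < th' -> th' < th ->
  \forall n \near \oo, powR th' e * tau s d n <= tau s d (Num.truncn (th * n%:R)).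
Proof.
move=> th'0 th'th; pose th2 := (th' + th) / 2.
have th'th2 : th' < th2 by rewrite /th2; lra.
have th2th : th2 < th by rewrite /th2; lra.
have th0 : 0 < th by lra.
apply: filterS2 (tau_ge_scaled th'0 th'th2) (truncn_ge_scaled th0 th2th).
by move=> n /[apply].
Qed.

Context {p : nat} {w : 'rV[R]_p -> 'rV[R]_p -> \bar R}.
Local Notation pt := 'rV[R]_p.

Lemma hlow_gt_near E c : (c%:E < hlow w s d E)%E ->
  \forall n \near \oo, ((c * tau s d n)%:E < Pcal w s E n)%E.
Proof.
move=> /limn_einf_gt_near c_lt; apply: filterS2 tau_gt0_near c_lt => n tau_gt0.
by rewrite EFinM -lte_pdivlMr.
Qed.

Lemma hlow_ge_near E c :
  (\forall n \near \oo, ((c * tau s d n)%:E <= Pcal w s E n)%E) ->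
  (c%:E <= hlow w s d E)%E.
Proof.
move=> c_le; apply: limn_einf_ge_near; apply: filterS2 tau_gt0_near c_le.
by move=> n tau_gt0; rewrite lee_pdivlMr // -EFinM.
Qed.

Lemma Pcal_ge_scaled {E} {M : nat -> nat} {x t : R} : 0 < x -> 0 < t ->
  ((powR x (- e))%:E < hlow w s d E)%E -> M @ \oo --> \oo ->
  (\forall n \near \oo, powR (x / t) e * tau s d n <= tau s d (M n)) ->
  \forall n \near \oo, ((powR t (- e) * tau s d n)%:E <= Pcal w s E (M n))%E.
Proof.
move=> x0 t0 /hlow_gt_near hE M_oo tauM.
have -> : powR t (- e) = powR x (- e) * powR (x / t) e.
  rewrite [in RHS]powRN powRM ?invr_ge0 ?ltW // mulKf ?gt_eqF ?powR_gt0 //.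
  by rewrite -[t^-1]powR_inv1 ?ltW // -powRrM mulN1r.
have hEM : \forall n \near \oo,
    ((powR x (- e) * tau s d (M n))%:E < Pcal w s E (M n))%E := M_oo _ hE.
apply: filterS2 hEM tauM => n /ltW PM tau_le; apply: le_trans PM.
by rewrite lee_fin -mulrA ler_wpM2l ?powR_ge0.
Qed.

Lemma hlow_union_ge {B C : set pt} {a a' b b' : R} :
  (forall x y, (B `|` C) x -> (B `|` C) y -> (0 <= w x y)%E) ->
  0 < a -> a < a' -> 0 < b -> b < b' ->
  ((powR a (- e))%:E < hlow w s d B)%E -> ((powR b (- e))%:E < hlow w s d C)%E ->
  ((powR (a' + b') (- e))%:E <= hlow w s d (B `|` C))%E.
Proof.
move=> w_ge0 a0 aa' b0 bb' hB hC; set t := a' + b'.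
have t0 : 0 < t by rewrite /t; lra.
have shares : a' / t + b' / t = 1 by rewrite -mulrDl divff ?gt_eqF.
have at0 : 0 < a / t by rewrite divr_gt0.
have bt0 : 0 < b / t by rewrite divr_gt0.
have a't0 : 0 < a' / t by rewrite divr_gt0 //; lra.
have b't0 : 0 < b' / t by rewrite divr_gt0 //; lra.
have at_lt : a / t < a' / t by rewrite ltr_pM2r ?invr_gt0.
have bt_lt : b / t < b' / t by rewrite ltr_pM2r ?invr_gt0.
pose mB n := Num.truncn (a' / t * n%:R); pose mC n := (n - mB n)%N.
have mB_le n : (mB n)%:R <= a' / t * n%:R by rewrite /mB truncn_le mulr_ge0 ?ler0n ?ltW.
have mB_leq n : (mB n <= n)%N.
  by rewrite -(ler_nat R); apply: le_trans (mB_le n) _; rewrite ler_piMl //; lra.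
have mC_ge n : b' / t * n%:R <= (mC n)%:R.
  have : a' / t * n%:R + b' / t * n%:R = n%:R by rewrite -mulrDl shares mul1r.
  by rewrite natrB ?mB_leq //; have := mB_le n; lra.
apply: hlow_ge_near; near=> n.
rewrite -[n in Pcal _ _ _ n](subnKC (mB_leq n)).
apply: le_trans (Pcal_cat_ge s w_ge0 _ _); rewrite le_min; apply/andP; split.
- near: n; apply: (Pcal_ge_scaled a0 t0 hB).
    exact: cvgn_ge_scaled at0 (truncn_ge_scaled a't0 at_lt).
  exact: tau_truncn_ge.
- near: n; apply: (Pcal_ge_scaled b0 t0 hC).
    apply: (cvgn_ge_scaled b't0); exact: nearW.
  by apply: filterS (tau_ge_scaled bt0 bt_lt) => n /(_ _ (mC_ge n)).
Unshelve. all: by end_near. Qed.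

End lower_polarization.

Section negpow.
Context {R : realType} (s : R) (d : nat).
Hypotheses (d_gt0 : (0 < d)%N) (s_gt0 : 0 < s).
Local Open Scope ereal_scope.

Lemma negpow_ge0 h : 0 <= negpow s d h.
Proof. by case: h => [r| |] //=; case: ifP => _; rewrite ?leey ?lee_fin ?powR_ge0. Qed.

Lemma negpow_neqNy h : negpow s d h != -oo.
Proof. by case: h => [r| |] //=; case: ifP. Qed.

Lemma le_negpow : {homo negpow s d : h h' /~ h <= h'}.
Proof.
move=> [r| |] [r'| |] //=; rewrite ?leey ?lee_fin //; last first.
  by move=> _; exact: (negpow_ge0 r'%:E).
move=> le_r'r.
have [r0|r0] := lerP r 0; first by rewrite (le_trans le_r'r r0).
have [//|r'0] := lerP r' 0; first by rewrite leey.
rewrite lee_fin !powRN lef_pV2 ?posrE ?powR_gt0 //.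
by apply: ge0_ler_powR; rewrite ?nnegrE ?divr_ge0 ?ler0n ?(ltW s_gt0) ?(ltW r0) ?(ltW r'0).
Qed.

Lemma negpow_powRN t : (0 < t)%R -> negpow s d (powR t (- (s / d%:R)))%:E = t%:E.
Proof.
move=> t0 /=; rewrite leNgt powR_gt0 //= -powRrM mulrNN mulrA divfK ?gt_eqF ?ltr0n //.
by rewrite mulfV ?gt_eqF // powRr1 ?ltW.
Qed.

Lemma powRN_lt_of_negpow_lt h t : (0 < t)%R ->
  negpow s d h < t%:E -> (powR t (- (s / d%:R)))%:E < h.
Proof.
move=> t0; apply: contraTT; rewrite -!leNgt => /le_negpow.
by rewrite negpow_powRN.
Qed.

Lemma negpow_le_of_powRN_le h t : (0 < t)%R ->
  (powR t (- (s / d%:R)))%:E <= h -> negpow s d h <= t%:E.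
Proof. by move=> t0 /le_negpow; rewrite negpow_powRN. Qed.

End negpow.

Theorem lemma3 (R : realType) (p : nat) (B C : set 'rV[R]_p)
    (w : 'rV[R]_p -> 'rV[R]_p -> \bar R)
    (hw : forall x y, (B `|` C) x -> (B `|` C) y -> (0 <= w x y)%E)
    (d : nat) (s : R) (hd0 : (0 < d)%N) (hdp : (d <= p)%N) (hds : d%:R <= s) :
  (negpow s d (hlow w s d (B `|` C))
    <= negpow s d (hlow w s d B) + negpow s d (hlow w s d C))%E.
Proof.
have s_gt0 : 0 < s by apply: lt_le_trans hds; rewrite ltr0n.
case EB: (negpow s d (hlow w s d B)) => [a| |]; last 2 first.
- by rewrite addye ?negpow_neqNy ?leey.
- by have := negpow_neqNy s d (hlow w s d B); rewrite EB.
case EC: (negpow s d (hlow w s d C)) => [b| |]; last 2 first.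
- by rewrite addey ?leey.
- by have := negpow_neqNy s d (hlow w s d C); rewrite EC.
have a0 : 0 <= a by rewrite -lee_fin -EB negpow_ge0.
have b0 : 0 <= b by rewrite -lee_fin -EC negpow_ge0.
apply/lee_addgt0Pr => eps eps0; rewrite -EFinD.
have hB : ((powR (a + eps / 4) (- (s / d%:R)))%:E < hlow w s d B)%E.
  by apply: (powRN_lt_of_negpow_lt _ _ hd0 s_gt0); rewrite ?EB ?lte_fin; lra.
have hC : ((powR (b + eps / 4) (- (s / d%:R)))%:E < hlow w s d C)%E.
  by apply: (powRN_lt_of_negpow_lt _ _ hd0 s_gt0); rewrite ?EC ?lte_fin; lra.
apply: (negpow_le_of_powRN_le _ _ hd0 s_gt0); first lra.
have -> : a + b + eps = a + eps / 2 + (b + eps / 2) by lra.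
apply: (hlow_union_ge hd0 hds hw _ _ _ _ hB hC); lra.
Qed.
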